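(* Let $G$ be a graph of order $p$ with at least one edge and independence number $\alpha$. Then $str(G)\ge 2p-2\alpha+1$.
   Context: For a graph $G$ of order $p$, a numbering is a bijection $f:V(G)\to[1,p]$; $str_f(G)=\max\{f(u)+f(v): uv\in E(G)\}$ and $str(G)=\min_f str_f(G)$. *)

From mathcomp Require Import all_boot.
Set Implicit Arguments. Unset Strict Implicit. Unset Printing Implicit Defensive.

Definition simple_graph (T : finType) (e : rel T) : Prop :=
  symmetric e /\ irreflexive e.

(* A numbering is a bijection V -> [1, p].  We represent it by an injective
   finite function f : T -> 'I_#|T| (which is then a bijection onto 'I_#|T|),
   the label of x being (f x).+1 in [1, p]. *)
Definition numbering (T : finType) (f : {ffun T -> 'I_#|T|}) : bool :=
  injectiveb f.

Definition label (T : finType) (f : {ffun T -> 'I_#|T|}) (x : T) : nat :=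
  (f x).+1.

Definition str_f (T : finType) (e : rel T) (f : {ffun T -> 'I_#|T|}) : nat :=
  \max_(uv : T * T | e uv.1 uv.2) (label f uv.1 + label f uv.2).

(* str(G) = min over numberings f of str_f(G).  The default value 2*#|T|
   is an upper bound for every str_f, so it does not affect the minimum
   (and numberings always exist). *)
Definition str (T : finType) (e : rel T) : nat :=
  \big[minn/(#|T|.*2)]_(f : {ffun T -> 'I_#|T|} | numbering f) str_f e f.

Definition independent (T : finType) (e : rel T) (S : {set T}) : bool :=
  [forall x in S, forall y in S, ~~ e x y].

Definition independence_number (T : finType) (e : rel T) : nat :=
  \max_(S : {set T} | independent e S) #|S|.

From mathcomp Require Import all_boot.
From mathcomp Require Import zify.

Set Implicit Arguments.
Unset Strict Implicit.
Unset Printing Implicit Defensive.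

(* Fix a numbering f and write s = str_f(G).  Every edge uv has
   f(u) + f(v) <= s.  Call x "low" when 2 f(x) < s.  Since the labels are
   distinct positive integers, there are at most (s-1)/2 low vertices.  Two
   distinct non-low vertices have distinct labels, each at least s/2, so their
   label sum exceeds s: they are not adjacent.  Hence the non-low vertices form
   an independent set, so p - alpha <= #low <= (s-1)/2, i.e.
   s >= 2p - 2alpha + 1.  Taking the minimum over all numberings gives the
   bound for str(G); the default value 2p of that minimum also satisfies the
   bound because a graph with an edge has alpha >= 1. *)

Lemma independent_card_le (T : finType) (e : rel T) (S : {set T}) :
  independent e S -> (#|S| <= independence_number e)%N.
Proof.
by move=> indS; apply: (@leq_bigmax_cond _ (independent e) (fun S => #|S|)).
Qed.

(* A loopless graph with a vertex u has alpha >= 1, as {u} is independent. *)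
Lemma independence_number_gt0 (T : finType) (e : rel T) (u : T) :
  irreflexive e -> (0 < independence_number e)%N.
Proof.
move=> eirr; rewrite -(cards1 u); apply: independent_card_le.
apply/forallP => x; apply/implyP; rewrite inE => /eqP ->.
by apply/forallP => y; apply/implyP; rewrite inE => /eqP ->; rewrite eirr.
Qed.

Section FixedNumbering.

Variables (T : finType) (e : rel T) (f : {ffun T -> 'I_#|T|}).
Hypothesis f_inj : injective f.

Lemma edge_label_sum_le x y :
  e x y -> (label f x + label f y <= str_f e f)%N.
Proof.
move=> exy; rewrite /str_f.
exact: (@leq_bigmax_cond _ (fun uv : T * T => e uv.1 uv.2)
          (fun uv => label f uv.1 + label f uv.2) (x, y)).
Qed.

Definition low_vertices (s : nat) : {set T} := [set x | 2 * label f x < s].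

(* Distinct positive labels below s/2 are at most (s-1)/2 in number. *)
Lemma card_low_vertices s : (#|low_vertices s| <= s.-1 %/ 2)%N.
Proof.
have -> : #|low_vertices s| = size [seq val (f x) | x <- enum (low_vertices s)].
  by rewrite size_map cardE.
rewrite -(size_iota 0 (s.-1 %/ 2)); apply: uniq_leq_size.
  by rewrite map_inj_uniq ?enum_uniq // => x y /val_inj /f_inj.
move=> n /mapP [x]; rewrite mem_enum inE /label => low_x ->.
rewrite mem_iota /=; move: low_x; move: (nat_of_ord (f x)) => m; lia.
Qed.

Lemma high_label_sum_gt s x y : x != y ->
  ~~ (2 * label f x < s) -> ~~ (2 * label f y < s) ->
  (s < label f x + label f y)%N.
Proof.
move=> nxy; rewrite -!leqNgt /label.
have : (f x : nat) <> f y by move=> /val_inj /f_inj /eqP; rewrite (negbTE nxy).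
lia.
Qed.

Lemma high_vertices_independent :
  irreflexive e -> independent e (~: low_vertices (str_f e f)).
Proof.
move=> eirr; apply/forallP => x; apply/implyP; rewrite !inE => high_x.
apply/forallP => y; apply/implyP; rewrite !inE => high_y.
have [<-|nxy] := eqVneq x y; first by rewrite eirr.
apply/negP => /edge_label_sum_le; rewrite leqNgt.
by rewrite (high_label_sum_gt nxy high_x high_y).
Qed.

(* The lower bound of the theorem holds for every single numbering, as soon
   as the graph has an edge (which makes str_f positive). *)
Lemma str_f_lower_bound u v : irreflexive e -> e u v ->
  (2 * #|T| - 2 * independence_number e + 1 <= str_f e f)%N.
Proof.
move=> eirr euv.
have s_gt0 : (0 < str_f e f)%N.
  by have := edge_label_sum_le euv; rewrite /label; lia.
have high_le := independent_card_le (high_vertices_independent eirr).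
have low_le := card_low_vertices (str_f e f).
have := cardsC (low_vertices (str_f e f)); lia.
Qed.

End FixedNumbering.

Theorem mainTheorem11 (T : finType) (e : rel T) :
  simple_graph e ->
  (exists u v : T, e u v) ->
  (2 * #|T| - 2 * independence_number e + 1 <= str e)%N.
Proof.
move=> [_ eirr] [u [v euv]].
have alpha_gt0 := independence_number_gt0 u eirr.
have p_gt0 : (0 < #|T|)%N by apply/card_gt0P; exists u.
rewrite /str; apply: (big_ind (fun n => 2 * #|T| - 2 * independence_number e + 1 <= n)%N).
- by rewrite -mul2n; lia.
- by move=> m n lb_m lb_n; rewrite leq_min lb_m lb_n.
- by move=> f /injectiveP f_inj; apply: str_f_lower_bound euv.
Qed.
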